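(* Let $\Gamma$ be a metrized graph that is a tree with $v$ vertices. For any $p \in V(\Gamma)$, $$\ell(\Gamma) = \sum_{q \in V(\Gamma)}\big(2-\mathrm{val}(q)\big)\,r(p,q).$$ In particular, if each edge length is equal to $1$, $$v-1 = \sum_{q \in V(\Gamma)}\big(2-\mathrm{val}(q)\big)\,r(p,q).$$
   Context: A metrized graph is a finite connected graph each of whose edges is identified with a closed segment of positive length; its vertex set $V(\Gamma)$ is a finite nonempty set containing every point of valence $\neq 2$, and $v=\#V(\Gamma)$. $\mathrm{val}(q)$ is the valence of $q$ (number of directions emanating from $q$). $\ell(\Gamma)$ is the total length. $r(p,q)$ is the effective resistance between $p$ and $q$ (edges as resistors of resistance equal to length), which on a tree equals the path distance. *)

From Stdlib Require Import ClassicalEpsilon.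
From mathcomp Require Import all_boot all_order all_algebra.
Set Implicit Arguments. Unset Strict Implicit. Unset Printing Implicit Defensive.
Import Order.TTheory GRing.Theory Num.Theory.
Local Open Scope ring_scope.

(* A metrized tree is modelled by its vertex set V(Gamma) = the finite type T,
   the (simple) adjacency relation e : rel T of the underlying combinatorial
   graph, and the edge lengths w : T -> T -> R (only values on edges matter). *)

Definition acyclic (T : finType) (e : rel T) : Prop :=
  forall (x : T) (s : seq T), uniq (x :: s) -> (2 <= size s)%N ->
    path e x s -> ~~ e (last x s) x.

Definition is_tree (T : finType) (e : rel T) : Prop :=
  symmetric e /\ irreflexive e /\ (forall x y : T, connect e x y) /\ acyclic e.

Definition edge_lengths (R : realFieldType) (T : finType) (e : rel T)
  (w : T -> T -> R) : Prop :=
  forall x y : T, e x y -> 0 < w x y /\ w x y = w y x.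

(* total length: each unordered edge {x,y} is counted twice in the ordered sum *)
Definition total_length (R : realFieldType) (T : finType) (e : rel T)
  (w : T -> T -> R) : R :=
  (\sum_(x : T) \sum_(y : T | e x y) w x y) / 2%:R.

Definition valence (T : finType) (e : rel T) (q : T) : nat :=
  #|[pred y | e q y]|.

Definition is_upath (T : finType) (e : rel T) (p q : T) (s : seq T) : Prop :=
  [/\ path e p s, last p s = q & uniq (p :: s)].

Definition path_length (R : realFieldType) (T : finType) (w : T -> T -> R)
  (p : T) (s : seq T) : R :=
  \sum_(xy <- zip (p :: s) s) w xy.1 xy.2.

(* r(p,q) on a tree: length of the (unique) simple path from p to q *)
Definition tree_dist (R : realFieldType) (T : finType) (e : rel T)
  (w : T -> T -> R) (p q : T) : R :=
  path_length w p (epsilon (inhabits [::]) (is_upath e p q)).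

From Stdlib Require Import ClassicalEpsilon.
From mathcomp Require Import all_boot all_order all_algebra ring.
Set Implicit Arguments. Unset Strict Implicit. Unset Printing Implicit Defensive.
Import GRing.Theory Num.Theory.

(* Root the tree at p.  Every q != p has a parent, the penultimate vertex of the
   unique simple path from p to q, and every edge joins a vertex to its parent in
   exactly one direction.  Counting edges through their child endpoint gives
   sum_q val(q) f(q) = sum_(q != p) (f q + f (parent q)), and
   r(p,q) = r(p, parent q) + w(parent q, q).  Hence
   sum_q (2 - val q) r(p,q) = sum_(q != p) (r(p,q) - r(p, parent q)),
   which is the sum of all edge lengths. *)

Lemma split_first_mem (T : eqType) (s1 s2 : seq T) :
  has (mem s2) s1 ->
  exists u c v, [/\ s1 = u ++ c :: v, c \in s2 & {in u, forall z, z \notin s2}].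
Proof.
elim: s1 => [|a s IH] //= /orP[s2a|has_s].
  by exists [::], a, s.
have [s2a|s2'a] := boolP (a \in s2); first by exists [::], a, s.
have [u [c [v [-> s2c s2'u]]]] := IH has_s.
exists (a :: u), c, v; split => // z; rewrite inE => /predU1P[->|] //; exact: s2'u.
Qed.

Section AcyclicPaths.

Variables (T : finType) (e : rel T).
Hypotheses (sym_e : symmetric e) (acyclic_e : acyclic e).

(* Two simple paths p ~> c meeting only at their ends close up to a cycle. *)
Lemma acyclic_disjoint_paths p c u1 u2 :
  path e p (rcons u1 c) -> path e p (rcons u2 c) ->
  uniq (p :: rcons u1 c) -> uniq (p :: rcons u2 c) ->
  {in u1, forall z, z \notin u2} -> (0 < size u1 + size u2)%N -> False.
Proof.
move=> e_u1 e_u2 uniq_u1 uniq_u2 u1'u2 u12_nonempty.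
have e_u2_rev : path e c (rcons (rev u2) p).
  move: e_u2; rewrite (eq_path sym_e) -rev_path last_rcons belast_rcons.
  by rewrite rev_cons.
pose s := u1 ++ c :: rev u2.
have uniq_s : uniq (p :: s).
  rewrite /s -cat_rcons -cat_cons cat_uniq uniq_u1 rev_uniq.
  move: uniq_u2; rewrite /= mem_rcons !inE rcons_uniq negb_or.
  case/andP=> /andP[p'c p'u2] /andP[c'u2 ->]; rewrite andbT.
  apply/hasPn => z; rewrite mem_rev => u2z.
  rewrite !inE mem_rcons !inE !negb_or; apply/and3P; split.
  - by apply: contraNneq p'u2 => <-.
  - by apply: contraNneq c'u2 => <-.
  - by apply/negP => /u1'u2; rewrite u2z.
have size_s : (2 <= size s)%N by rewrite size_cat /= size_rev addnS ltnS.
move: e_u2_rev; rewrite rcons_path => /andP[e_rev e_last].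
have e_s : path e p s by rewrite /s -cat_rcons cat_path e_u1 last_rcons.
by move: (acyclic_e uniq_s size_s e_s); rewrite /s last_cat /= e_last.
Qed.

Lemma upath_unique p q s1 s2 : is_upath e p q s1 -> is_upath e p q s2 -> s1 = s2.
Proof.
elim: s1 p s2 => [|a s1 IH] p [|b s2] [e_s1 last_s1 uniq_s1] [e_s2 last_s2 uniq_s2] //.
- by move: last_s1 uniq_s2 => /= ->; rewrite -last_s2 /= mem_last.
- by move: last_s2 uniq_s1 => /= ->; rewrite -last_s1 /= mem_last.
have [eq_ab|neq_ab] := eqVneq a b.
  rewrite -eq_ab in e_s2 uniq_s2 last_s2 *; congr (_ :: _).
  apply: (IH a); split; by [case/andP: e_s1 | case/andP: uniq_s1
                            | case/andP: e_s2 | case/andP: uniq_s2 | ].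
exfalso.
have : has (mem (b :: s2)) (a :: s1).
  by apply/hasP; exists q; [rewrite -last_s1 | rewrite /= -last_s2];
    rewrite /= mem_last.
case/split_first_mem => u1 [c [v1 [def_s1 s2c s2'u1]]].
have [u2 [v2 def_s2]] : exists u2 v2, b :: s2 = u2 ++ c :: v2.
  by case/splitPr: s2c => u2 v2; exists u2, v2.
rewrite def_s1 in e_s1 uniq_s1; rewrite def_s2 in e_s2 uniq_s2 s2'u1.
apply: (@acyclic_disjoint_paths p c u1 u2).
- by move: e_s1; rewrite -cat_rcons cat_path => /andP[].
- by move: e_s2; rewrite -cat_rcons cat_path => /andP[].
- by move: uniq_s1; rewrite -cat_rcons -cat_cons cat_uniq => /andP[].
- by move: uniq_s2; rewrite -cat_rcons -cat_cons cat_uniq => /andP[].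
- by move=> z /s2'u1; rewrite mem_cat negb_or => /andP[].
rewrite lt0n addn_eq0; apply: contra neq_ab => /andP[/nilP u1_0 /nilP u2_0].
by move: def_s1 def_s2; rewrite u1_0 u2_0 => -[-> _] [-> _].
Qed.

End AcyclicPaths.

Section RootedTree.

Variables (T : finType) (e : rel T) (p : T).
Hypothesis tree_e : is_tree e.

Definition tree_path (q : T) : seq T := epsilon (inhabits [::]) (is_upath e p q).

(* Junk value [p] at the root. *)
Definition parent (q : T) : T := last p (belast p (tree_path q)).

Lemma tree_pathP q : is_upath e p q (tree_path q).
Proof.
case: tree_e => _ [_ [connected_e _]]; apply: epsilon_spec.
have /connectP[s e_s ->] := connected_e p q.
by case: (shortenP e_s) => s' e_s' uniq_s' _; exists s'.
Qed.

Lemma upath_tree_path q s : is_upath e p q s -> s = tree_path q.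
Proof.
case: tree_e => sym_e [_ [_ acyclic_e]] upath_s.
exact: (upath_unique sym_e acyclic_e upath_s (tree_pathP q)).
Qed.

Lemma tree_path_root : tree_path p = [::].
Proof. by apply/esym/upath_tree_path. Qed.

Lemma tree_path_parent q : q != p -> tree_path q = rcons (tree_path (parent q)) q.
Proof.
move=> nqp; have [] := tree_pathP q; rewrite /parent.
case/lastP: (tree_path q) => [_ /= qp|s x]; first by rewrite qp eqxx in nqp.
rewrite rcons_path last_rcons belast_rcons => /andP[e_s _] <- uniq_s.
congr rcons; apply: upath_tree_path; split => //.
by move: uniq_s; rewrite -rcons_cons rcons_uniq => /andP[].
Qed.

Lemma size_tree_path_parent q :
  q != p -> size (tree_path q) = (size (tree_path (parent q))).+1.
Proof. by move=> nqp; rewrite tree_path_parent // size_rcons. Qed.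

Lemma parent_edge q : q != p -> e (parent q) q.
Proof.
move=> nqp; have [] := tree_pathP q; rewrite tree_path_parent // rcons_path.
by case/andP=> _; case: (tree_pathP (parent q)) => _ ->.
Qed.

Lemma tree_path_child q y :
  e q y -> y \notin p :: tree_path q -> tree_path y = rcons (tree_path q) y.
Proof.
move=> eqy off_y; have [e_q last_q uniq_q] := tree_pathP q.
apply/esym/upath_tree_path; split; first by rewrite rcons_path e_q last_q.
  by rewrite last_rcons.
by rewrite -rcons_cons rcons_uniq off_y.
Qed.

Lemma parent_child q y :
  e q y -> y \notin p :: tree_path q -> (y != p) && (q == parent y).
Proof.
move=> eqy off_y; apply/andP; split.
  by apply: contraNneq off_y => ->; rewrite inE eqxx.
rewrite /parent (tree_path_child eqy off_y) belast_rcons /=.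
by case: (tree_pathP q) => _ ->.
Qed.

(* A neighbour y of q on the path to q other than the parent would close the
   cycle y -> ... -> q -> y. *)
Lemma parent_on_path q y :
  e q y -> y \in p :: tree_path q -> (q != p) && (y == parent q).
Proof.
case: tree_e => _ [irr_e [_ acyclic_e]] eqy on_y.
have nqp : q != p.
  apply: contraTneq on_y => qp; rewrite qp tree_path_root inE.
  by apply: contraTneq eqy => ->; rewrite qp irr_e.
rewrite nqp /=; move: on_y; rewrite tree_path_parent // -rcons_cons mem_rcons inE.
case/predU1P=> [yq|]; first by rewrite yq irr_e in eqy.
have [e_q _ uniq_q] := tree_pathP q; have [_ last_parent _] := tree_pathP (parent q).
rewrite tree_path_parent // in e_q uniq_q.
case/splitPr def_path: _ / => [u [|z v]].
  by move: (congr1 (last p) def_path); rewrite /= last_parent last_cat /= => ->.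
have def_q : p :: rcons (tree_path (parent q)) q = u ++ y :: rcons (z :: v) q.
  by rewrite -rcons_cons def_path rcons_cat.
have uniq_y : uniq (y :: rcons (z :: v) q).
  by move: uniq_q; rewrite def_q cat_uniq => /and3P[].
have e_y : path e y (rcons (z :: v) q).
  change (is_true (sorted e (p :: rcons (tree_path (parent q)) q))) in e_q.
  by move: e_q; rewrite def_q sorted_cat_cons => /andP[].
have size_cycle : (2 <= size (rcons (z :: v) q))%N by rewrite size_rcons.
by have := acyclic_e _ _ uniq_y size_cycle e_y; rewrite last_rcons eqy.
Qed.

Lemma edge_parentE x y :
  e x y = ((x != p) && (y == parent x)) || ((y != p) && (x == parent y)).
Proof.
case: tree_e => sym_e _; apply/idP/idP => [exy|].
  have [on_y|off_y] := boolP (y \in p :: tree_path x).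
    by rewrite (parent_on_path exy on_y).
  by rewrite (parent_child exy off_y) orbT.
by case/orP=> /andP[not_root /eqP->]; [rewrite sym_e|]; exact: parent_edge.
Qed.

Lemma parent_edge_excl x y :
  ~~ [&& x != p, y == parent x, y != p & x == parent y].
Proof.
apply/and4P=> -[nxp /eqP yx nyp /eqP xy].
have := size_tree_path_parent nxp; rewrite -yx (size_tree_path_parent nyp) -xy.
by move/eqP; rewrite -addn2 -{1}[size _]addn0 eqn_add2l.
Qed.

End RootedTree.

Local Open Scope ring_scope.

Lemma sum_edges_parent (V : nmodType) (T : finType) (e : rel T) (p : T)
    (f : T -> T -> V) :
  is_tree e ->
  \sum_x \sum_(y | e x y) f x y
    = \sum_(x | x != p) (f x (parent e p x) + f (parent e p x) x).
Proof.
move=> tree_e.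
have split_edges x : \sum_(y | e x y) f x y
    = \sum_(y | (x != p) && (y == parent e p x)) f x y
    + \sum_(y | (y != p) && (x == parent e p y)) f x y.
  rewrite (bigID [pred y | (x != p) && (y == parent e p x)]) /=.
  congr (_ + _); apply: eq_bigl => y;
    move: (parent_edge_excl p tree_e x y); rewrite (edge_parentE p tree_e);
    by case: (x != p); case: (y == parent e p x); case: (y != p);
       case: (x == parent e p y).
rewrite (eq_bigr _ (fun x _ => split_edges x)) big_split big_split /=.
congr (_ + _); last rewrite (exchange_big_dep xpredT) //=; rewrite [RHS]big_mkcond;
  apply: eq_bigr => x _; case: (x != p) => /=; rewrite ?big_pred1_eq ?big_pred0_eq //.
Qed.

Lemma path_length_rcons (R : realFieldType) (T : finType) (w : T -> T -> R) p s x :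
  path_length w p (rcons s x) = path_length w p s + w (last p s) x.
Proof.
elim: s p => [|a s IH] p; first by rewrite /path_length /= big_seq1 big_nil add0r.
by rewrite /path_length /= !big_cons -!/(path_length w a _) IH addrA.
Qed.

Section TreeDistance.

Variables (R : realFieldType) (T : finType) (e : rel T) (w : T -> T -> R) (p : T).
Hypothesis tree_e : is_tree e.

Local Notation d := (tree_dist e w p).
Local Notation parent := (parent e p).

Lemma tree_dist_root : d p = 0.
Proof.
by rewrite /tree_dist -/(tree_path e p p) tree_path_root // /path_length big_nil.
Qed.

Lemma tree_dist_parent q : q != p -> d q = d (parent q) + w (parent q) q.
Proof.
move=> nqp; rewrite /tree_dist -!/(tree_path e p _) tree_path_parent //.
by rewrite path_length_rcons; case: (tree_pathP p tree_e (parent q)) => _ ->.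
Qed.

Lemma total_length_parent :
  edge_lengths e w -> total_length e w = \sum_(q | q != p) w (parent q) q.
Proof.
move=> lengths_w; rewrite /total_length (sum_edges_parent p w tree_e).
rewrite (eq_bigr (fun q => w (parent q) q *+ 2)) => [|q nqp]; last first.
  by have [_ ->] := lengths_w _ _ (parent_edge tree_e nqp); rewrite mulr2n.
by rewrite sumrMnl -[_ *+ 2]mulr_natr mulfK ?pnatr_eq0.
Qed.

Lemma sum_valence_mul (f : T -> R) :
  \sum_q (valence e q)%:R * f q = \sum_(q | q != p) (f q + f (parent q)).
Proof.
rewrite -(sum_edges_parent p (fun x _ => f x) tree_e); apply: eq_bigr => q _.
by rewrite (eq_bigl (mem [pred y | e q y])) // sumr_const mulr_natl.
Qed.

Lemma total_length_tree_dist :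
  edge_lengths e w ->
  total_length e w = \sum_q (2%:R - (valence e q)%:R) * d q.
Proof.
move=> lengths_w.
under eq_bigr do rewrite mulrBl.
rewrite sumrB sum_valence_mul (bigD1 p) //= tree_dist_root mulr0 add0r -sumrB.
rewrite total_length_parent //; apply: eq_bigr => q nqp.
by rewrite (tree_dist_parent nqp); ring.
Qed.

End TreeDistance.

Theorem lemma4p1 (R : realFieldType) (T : finType) (e : rel T)
  (w : T -> T -> R) (p : T) :
  is_tree e -> edge_lengths e w ->
  total_length e w
    = \sum_(q : T) (2%:R - (valence e q)%:R) * tree_dist e w p q
  /\ ((forall x y : T, e x y -> w x y = 1) ->
      (#|T|.-1)%:R
        = \sum_(q : T) (2%:R - (valence e q)%:R) * tree_dist e w p q).
Proof.
move=> tree_e lengths_w; rewrite -total_length_tree_dist //; split=> // unit_w.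
rewrite (total_length_parent p tree_e lengths_w).
rewrite (eq_bigr (fun=> 1)) => [|q nqp]; last by rewrite unit_w // parent_edge.
by rewrite (eq_bigl (mem (predC1 p))) // sumr_const cardC1.
Qed.
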